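(* Let $F$ be a functor on small types that weakly commutes with $\forall$. Then every $F[\Box-]$-coalgebra $(C,k_C)$ gives rise to an $F$-coalgebra $(\forall i.\,C\,i,\ k_{\forall C})$, and this operation is functorial (it extends to a functor from $F[\Box-]$-coalgebras to $F$-coalgebras, acting on a morphism $f$ by $g\mapsto\lambda i.\,f\,i\,(g\,i)$).
   Context: Ambient theory: an intensional dependent type theory with $\Sigma,\Pi$ (definitional $\beta,\eta$), identity types, a Tarski-style universe $U$ of small types (decoding implicit), function extensionality; equivalences in the sense of homotopy type theory. A non-small type $\mathsf{Size}$ with a small mere-proposition order $j<i$; for families of small types $A(i)$ over $\mathsf{Size}$ a small type $\forall i.A(i)$ with size-abstraction and application ($\beta,\eta$); $\forall j<i.A(j):=\forall j.(j<i)\to A(j)$ (inequality proof suppressed). A functor on small types: $F:U\to U$ with action $Ff:FA\to FB$ preserving identities and composition up to equality. An $F$-coalgebra is $(D,k)$, $k:D\to FD$; morphisms $h$ with a path $k'\circ h=Fh\circ k$. For $X:\mathsf{Size}\to U$, $\Box_iX:=\forall j<i.X\,j$; $X\overset{i}{\to}Y:=\forall i.X\,i\to Y\,i$; $\Box f\,i\,g:=\lambda j.f\,j\,(g\,j)$. An $F[\Box-]$-coalgebra is $(X,k)$ with $k:\forall i.X\,i\to F(\Box_iX)$; morphisms $h:X\overset{i}{\to}Y$ with a path $l\circ h=(\lambda i.F(\Box h\,i))\circ k$. $F$ weakly commutes with $\forall$ if for every $X:\mathsf{Size}\to U$ the canonical map $\mathsf{can}_X:F(\forall i.X\,i)\to\forall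 i.F(\Box_iX)$, $\mathsf{can}_X\,c'\,i:=F(\psi_X\,i)\,c'$, is an equivalence, where $\psi_X\,i:(\forall j.X\,j)\to\forall j<i.X\,j$, $\psi_X\,i\,c'\,j:=c'\,j$. *)

(* HoTT-style equivalence: bi-invertible map (pointwise homotopies). *)
Definition IsEquiv {A B : Type} (f : A -> B) : Type :=
  ({g : B -> A & forall x, g (f x) = x} * {h : B -> A & forall y, f (h y) = y})%type.

Record Functor := {
  F0 :> Type -> Type;
  Fmap : forall A B : Type, (A -> B) -> F0 A -> F0 B;
  Fmap_id : forall A : Type, Fmap A A (fun x => x) = (fun x => x);
  Fmap_comp : forall (A B C : Type) (f : A -> B) (g : B -> C),
      Fmap A C (fun x => g (f x)) = (fun x => Fmap B C g (Fmap A B f x))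
}.
Arguments Fmap f0 {A B} _ _.

Section Sized.
Context {Size : Type} (lt : Size -> Size -> Type).

(* \Box_i X := forall j < i. X j   (lt j i : j < i) *)
Definition Box (X : Size -> Type) (i : Size) : Type := forall j, lt j i -> X j.

Definition BoxMap {X Y : Size -> Type} (f : forall i, X i -> Y i) (i : Size)
  (g : Box X i) : Box Y i := fun j p => f j (g j p).

Definition psi (X : Size -> Type) (i : Size) (c' : forall j, X j) : Box X i :=
  fun j _ => c' j.

Definition can (F : Functor) (X : Size -> Type) (c' : F (forall i, X i)) :
  forall i, F (Box X i) := fun i => Fmap F (psi X i) c'.

Definition WeaklyCommutes (F : Functor) : Type :=
  forall X : Size -> Type, IsEquiv (can F X).

Definition IsBoxCoalgMorph (F : Functor) {X Y : Size -> Type}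
  (k : forall i, X i -> F (Box X i)) (l : forall i, Y i -> F (Box Y i))
  (h : forall i, X i -> Y i) : Prop :=
  (fun i x => l i (h i x)) = (fun i x => Fmap F (BoxMap h i) (k i x)).

(* The F-coalgebra structure on forall i. C i :
   k_{forall C} c := can^{-1} (\lambda i. k_C i (c i)) *)
Definition kAll (F : Functor) (wc : WeaklyCommutes F) {C : Size -> Type}
  (kC : forall i, C i -> F (Box C i)) (c : forall i, C i) : F (forall i, C i) :=
  projT1 (snd (wc C)) (fun i => kC i (c i)).

Definition AllMap {X Y : Size -> Type} (f : forall i, X i -> Y i)
  (g : forall i, X i) : forall i, Y i := fun i => f i (g i).

End Sized.

Definition IsCoalgMorph (F : Functor) {D D' : Type}
  (k : D -> F D) (k' : D' -> F D') (h : D -> D') : Prop :=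
  (fun x => k' (h x)) = (fun x => Fmap F h (k x)).

From Stdlib Require Import FunctionalExtensionality.

(* [can] is natural in [X], and it sends [kAll kC c] back to the pointwise
   coalgebra map [fun i => kC i (c i)].  Since [can] is injective, the
   [F]-coalgebra square for [AllMap f] can be checked after applying [can],
   where it becomes the [F[Box -]]-coalgebra square for [f] read pointwise.
   The action on morphisms preserves identities and composition
   definitionally. *)

Lemma Fmap_compE (F : Functor) {A B C : Type} (f : A -> B) (g : B -> C) (a : F A) :
  Fmap F (fun x => g (f x)) a = Fmap F g (Fmap F f a).
Proof. exact (f_equal (fun h => h a) (Fmap_comp F A B C f g)). Qed.

Section Equivalences.
Context {A B : Type} {f : A -> B} (e : IsEquiv f).

Lemma IsEquiv_section (y : B) : f (projT1 (snd e) y) = y.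
Proof. exact (projT2 (snd e) y). Qed.

Lemma IsEquiv_injective (x y : A) : f x = f y -> x = y.
Proof.
  intro Efxy.
  destruct e as [[g gK] _].
  rewrite <- (gK x), <- (gK y), Efxy.
  reflexivity.
Qed.

End Equivalences.

Section Sized.
Context {Size : Type} (lt : Size -> Size -> Type) (F : Functor).

Lemma can_natural {X Y : Size -> Type} (f : forall i, X i -> Y i)
  (c : F (forall i, X i)) :
  can lt F Y (Fmap F (AllMap f) c) = fun i => Fmap F (BoxMap lt f i) (can lt F X c i).
Proof.
  apply functional_extensionality_dep; intro i; unfold can.
  rewrite <- (Fmap_compE F (AllMap f) (psi lt Y i)).
  rewrite <- (Fmap_compE F (psi lt X i) (BoxMap lt f i)).
  reflexivity.
Qed.

Context (wc : WeaklyCommutes lt F).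

Lemma can_kAll {C : Size -> Type} (kC : forall i, C i -> F (Box lt C i))
  (c : forall i, C i) :
  can lt F C (kAll lt F wc kC c) = fun i => kC i (c i).
Proof. exact (IsEquiv_section (wc C) _). Qed.

Lemma kAll_morph {X Y : Size -> Type}
  (kX : forall i, X i -> F (Box lt X i)) (kY : forall i, Y i -> F (Box lt Y i))
  (f : forall i, X i -> Y i) :
  IsBoxCoalgMorph lt F kX kY f ->
  IsCoalgMorph F (kAll lt F wc kX) (kAll lt F wc kY) (AllMap f).
Proof.
  intro f_morph.
  apply functional_extensionality; intro c.
  apply (IsEquiv_injective (wc Y)).
  rewrite can_natural, !can_kAll.
  apply functional_extensionality_dep; intro i.
  exact (f_equal (fun h => h i (c i)) f_morph).
Qed.

End Sized.

Theorem propositionB5 (Size : Type) (lt : Size -> Size -> Type)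
  (lt_isProp : forall (i j : Size) (p q : lt j i), p = q)
  (F : Functor) (wc : WeaklyCommutes lt F) :
  (forall (X Y : Size -> Type)
          (kX : forall i, X i -> F (Box lt X i))
          (kY : forall i, Y i -> F (Box lt Y i))
          (f : forall i, X i -> Y i),
      IsBoxCoalgMorph lt F kX kY f ->
      IsCoalgMorph F (kAll lt F wc kX) (kAll lt F wc kY) (AllMap f))
  /\ (forall X : Size -> Type,
        AllMap (fun i (x : X i) => x) = (fun g => g))
  /\ (forall (X Y Z : Size -> Type) (f : forall i, X i -> Y i)
             (g : forall i, Y i -> Z i),
        AllMap (fun i x => g i (f i x)) = (fun c => AllMap g (AllMap f c))).
Proof.
  split; [| split].
  - intros X Y kX kY f. exact (kAll_morph lt F wc kX kY f).
  - reflexivity.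
  - reflexivity.
Qed.
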